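(* Let $\ket\psi$ be a pure $n$-qubit state, $t\ge1$, $\bm s\in\{0,1\}^n$. Consider the $t$-copy swap test for $\bm s$: a single ancilla qubit initialized to $\ket0$ and a state register $(\ket\psi\ket\psi)^{\otimes t}$; apply a Hadamard to the ancilla, then the controlled unitary $\ket0\bra0\otimes I+\ket1\bra1\otimes\mathrm{SWAP}_{\bm s}^{\otimes t}$, then a Hadamard to the ancilla, and measure the ancilla, obtaining a bit $x$. Then $x$ is a Bernoulli random variable with $\Pr(x=1)=\frac12(1-P(\bm s)^t)$, and $x$ has the same distribution as $\bm x\cdot\bm s$ with $\bm x\sim p_t$. Consequently, for each $m\ge1$, the estimator $1-\frac2m\sum_{k=1}^m x_k$ built from $m$ i.i.d. swap-test outcomes has the same distribution as $\widehat{P^t}(\bm s)=1-\frac2m\sum_{k=1}^m \bm x_k\cdot\bm s$ built from $m$ i.i.d. samples $\bm x_k\sim p_t$.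
   Context: Subsystems are bitstrings $\bm s\in\{0,1\}^n$ (qubit $j$ included iff $s_j=1$); $\bm x\cdot\bm s\in\{0,1\}$ is the dot product mod 2. $\rho_{\bm s}=\mathrm{Tr}_{\bar{\bm s}}\ket\psi\bra\psi$ and $P(\bm s)=\mathrm{Tr}(\rho_{\bm s}^2)$ (with $P(\bm 0)=1$). $\mathrm{SWAP}_{\bm s}$ swaps the qubits of subsystem $\bm s$ between two copies of the $n$-qubit space. The $t$-copy hidden cut circuit: an $n$-qubit group register is initialized to $\ket{0^n}$ and a state register to $(\ket\psi\ket\psi)^{\otimes t}$; apply $H^{\otimes n}$ to the group register; apply $\sum_{\bm s}\ket{\bm s}\bra{\bm s}\otimes \mathrm{SWAP}_{\bm s}^{\otimes t}$; apply $H^{\otimes n}$ to the group register; measure the group register in the computational basis; $p_t$ denotes the resulting distribution. *)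

From HB Require Import structures.
From mathcomp Require Import all_boot all_order all_algebra.
Set Implicit Arguments. Unset Strict Implicit. Unset Printing Implicit Defensive.
Import Order.TTheory GRing.Theory Num.Theory.
Local Open Scope ring_scope.

(* bitstrings s in {0,1}^n; bit j set iff qubit j included *)
Definition bits (n : nat) := {ffun 'I_n -> bool}.

Definition zero_bits (n : nat) : bits n := [ffun _ => false].

Definition dotb (n : nat) (x s : bits n) : bool :=
  odd (\sum_(j < n) nat_of_bool (x j && s j))%N.

(* x has support inside s : a basis state of subsystem s *)
Definition supp_in (n : nat) (s x : bits n) : bool := [forall j, x j ==> s j].
Definition bor (n : nat) (x y : bits n) : bits n := [ffun j => x j || y j].
Definition complb (n : nat) (s : bits n) : bits n := [ffun j => ~~ s j].

(* reduced density matrix rho_s = Tr_{bar s} |psi><psi|, with the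
   computational basis of subsystem s indexed by bitstrings supported in s *)
Definition rdm (C : numClosedFieldType) (n : nat) (psi : {ffun bits n -> C})
    (s a a' : bits n) : C :=
  \sum_(c : bits n | supp_in (complb s) c) psi (bor a c) * (psi (bor a' c))^*.

Definition purity (C : numClosedFieldType) (n : nat) (psi : {ffun bits n -> C})
    (s : bits n) : C :=
  \sum_(a : bits n | supp_in s a) \sum_(a' : bits n | supp_in s a')
     rdm psi s a a' * rdm psi s a' a.

Definition normalized (C : numClosedFieldType) (n : nat) (psi : {ffun bits n -> C}) :=
  \sum_(x : bits n) `|psi x| ^+ 2 = 1.

Definition reg (n t : nat) := {ffun 'I_t -> bits n * bits n}.

Definition init_reg (C : numClosedFieldType) (n t : nat) (psi : {ffun bits n -> C})
    (r : reg n t) : C :=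
  \prod_(k < t) (psi (r k).1 * psi (r k).2).

Definition swapS (n : nat) (s : bits n) (p : bits n * bits n) : bits n * bits n :=
  ([ffun j => if s j then p.2 j else p.1 j], [ffun j => if s j then p.1 j else p.2 j]).
Definition swapT (n t : nat) (s : bits n) (r : reg n t) : reg n t :=
  [ffun k => swapS s (r k)].

(* the linear operator |x> |-> |f x>, acting on amplitude vectors *)
Definition perm_op (C : numClosedFieldType) (T : finType) (f : T -> T) (v : T -> C)
    : T -> C := fun y => \sum_(x : T | f x == y) v x.

Definition had1 (C : numClosedFieldType) (b b' : bool) : C :=
  (if b && b' then -1 else 1) / sqrtC 2.

Definition swap_test_final (C : numClosedFieldType) (n t : nat)
    (psi : {ffun bits n -> C}) (s : bits n) : bool * reg n t -> C :=
  let v0 := fun p : bool * reg n t => if p.1 then 0 else init_reg psi p.2 in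
  let v1 := fun p : bool * reg n t => \sum_(b : bool) had1 C p.1 b * v0 (b, p.2) in
  let v2 := fun p : bool * reg n t =>
      if p.1 then perm_op (swapT s) (fun r => v1 (true, r)) p.2 else v1 p in
  fun p => \sum_(b : bool) had1 C p.1 b * v2 (b, p.2).

Arguments swap_test_final {C n} t psi s.

Definition swap_test_prob (C : numClosedFieldType) (n t : nat)
    (psi : {ffun bits n -> C}) (s : bits n) (x : bool) : C :=
  \sum_(r : reg n t) `|swap_test_final t psi s (x, r)| ^+ 2.

Arguments swap_test_prob {C n} t psi s x.

Definition hadn (C : numClosedFieldType) (n : nat) (x y : bits n) : C :=
  (-1) ^+ nat_of_bool (dotb x y) / sqrtC (2 ^+ n).

Definition hidden_cut_final (C : numClosedFieldType) (n t : nat)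
    (psi : {ffun bits n -> C}) : bits n * reg n t -> C :=
  let v0 := fun p : bits n * reg n t =>
      if p.1 == zero_bits n then init_reg psi p.2 else 0 in
  let v1 := fun p : bits n * reg n t => \sum_(y : bits n) hadn C p.1 y * v0 (y, p.2) in
  let v2 := fun p : bits n * reg n t =>
      perm_op (swapT p.1) (fun r => v1 (p.1, r)) p.2 in
  fun p => \sum_(y : bits n) hadn C p.1 y * v2 (y, p.2).

Arguments hidden_cut_final {C n} t psi.

Definition pt (C : numClosedFieldType) (n t : nat) (psi : {ffun bits n -> C})
    (x : bits n) : C :=
  \sum_(r : reg n t) `|hidden_cut_final t psi (x, r)| ^+ 2.

Arguments pt {C n} t psi x.

Definition est (C : numClosedFieldType) (m : nat) (xs : {ffun 'I_m -> bool}) : C :=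
  1 - 2%:R / m%:R * \sum_(k < m) (nat_of_bool (xs k))%:R.

(* Both circuits act on the states Psi_y := SWAP_y^{(x)t} (psi psi)^{(x)t}, and
   <Psi_y'|Psi_y> = P(y (+) y')^t: by the product structure it is the t-th power
   of <psi psi|SWAP_z|psi psi>, which splitting bitstrings along z identifies with
   Tr rho_z^2.  The swap test outputs (Psi_0 + (-1)^a Psi_s)/2, whence
   Pr(a) = (1 + (-1)^a P(s)^t)/2.  The hidden cut circuit outputs
   2^-n sum_y (-1)^{x.y} Psi_y, whence p_t(x) = 2^-n sum_z (-1)^{x.z} P(z)^t; summing
   over {x | x.s = b}, orthogonality of characters keeps only z = 0 and z = s.
   The estimator statement is the pushforward of an i.i.d. product along x |-> x.s. *)

From HB Require Import structures.
From mathcomp Require Import all_boot all_order all_algebra.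
From mathcomp Require Import ring.
Import Order.TTheory GRing.Theory Num.Theory.
Local Open Scope ring_scope.
Set Implicit Arguments. Unset Strict Implicit. Unset Printing Implicit Defensive.

Lemma perm_op_involutive (C : numClosedFieldType) (T : finType) (f : T -> T)
    (v : T -> C) (y : T) :
  involutive f -> perm_op f v y = v (f y).
Proof.
move=> fK; rewrite /perm_op (big_pred1 (f y)) // => x /=.
by apply/eqP/eqP => [<-|->]; rewrite fK.
Qed.

Lemma sum_prod_pushforward (R : comPzSemiRingType) (I A B : finType) (f : A -> B)
    (p : A -> R) (q : B -> R) (P : pred {ffun I -> B}) :
  (forall b, q b = \sum_(a | f a == b) p a) ->
  \sum_(xs | P xs) \prod_(k : I) q (xs k)
  = \sum_(X : {ffun I -> A} | P [ffun k => f (X k)]) \prod_(k : I) p (X k).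
Proof.
move=> qE; rewrite (partition_big (fun X : {ffun I -> A} => [ffun k => f (X k)]) P) //=.
apply: eq_bigr => xs Pxs; under eq_bigr => k _ do rewrite qE.
rewrite bigA_distr_big_dep; apply: eq_bigl => X.
apply/familyP/andP => [fX|[_ /eqP <- k]]; last by rewrite ffunE unfold_in /=.
suff -> : [ffun k => f (X k)] = xs by [].
by apply/ffunP => k; rewrite ffunE; apply/eqP; exact: fX.
Qed.

Lemma sum_normCK_lincomb (C : numClosedFieldType) (I T : finType) (c : I -> C)
    (v : I -> T -> C) :
  \sum_(r : T) `|\sum_(i : I) c i * v i r| ^+ 2
  = \sum_(i : I) \sum_(j : I) c i * (c j)^* * \sum_(r : T) v i r * (v j r)^*.
Proof.
under eq_bigr => r _ do rewrite normCK rmorph_sum big_distrlr.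
rewrite exchange_big; apply: eq_bigr => i _; rewrite exchange_big.
apply: eq_bigr => j _; rewrite mulr_sumr; apply: eq_bigr => r _.
by rewrite /= rmorphM; ring.
Qed.

Lemma sum_indicator (R : pzSemiRingType) (T : finType) (F : T -> R) (a : T) :
  \sum_(z : T) (z == a)%:R * F z = F a.
Proof.
by rewrite (bigD1 a) //= eqxx mul1r big1 ?addr0 // => z /negPf ->; rewrite mul0r.
Qed.

Lemma conj_sign_divn (C : numClosedFieldType) (k m : nat) :
  ((-1) ^+ k / m%:R : C)^* = (-1) ^+ k / m%:R.
Proof. by rewrite fmorph_div rmorph_sign rmorph_nat. Qed.

Section Bitstrings.
Variable n : nat.
Implicit Types (s x y z a c : bits n).

Definition bxor x y : bits n := [ffun j => x j (+) y j].

Lemma bxorK y : involutive (bxor y).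
Proof. by move=> z; apply/ffunP => j; rewrite !ffunE addKb. Qed.

Lemma bxor0r z : bxor z (zero_bits n) = z.
Proof. by apply/ffunP => j; rewrite !ffunE addbF. Qed.

Lemma bxor0l z : bxor (zero_bits n) z = z.
Proof. by apply/ffunP => j; rewrite !ffunE. Qed.

Lemma bxorxx z : bxor z z = zero_bits n.
Proof. by apply/ffunP => j; rewrite !ffunE addbb. Qed.

Lemma bxor_eq0 x y : (bxor x y == zero_bits n) = (x == y).
Proof. by apply/eqP/eqP => [/(congr1 (bxor x))|->]; rewrite ?bxorK ?bxor0r ?bxorxx. Qed.

Lemma swapS_involutive s : involutive (swapS s).
Proof.
by case=> x y; congr pair; apply/ffunP => j; rewrite !ffunE /=; case: (s j).
Qed.

Lemma swapS0 (p : bits n * bits n) : swapS (zero_bits n) p = p.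
Proof. by case: p => x y; congr pair; apply/ffunP => j; rewrite !ffunE. Qed.

Lemma swapT0 t (r : reg n t) : swapT (zero_bits n) r = r.
Proof. by apply/ffunP => k; rewrite ffunE swapS0. Qed.

Lemma swapT_involutive t s : involutive (@swapT n t s).
Proof. by move=> r; apply/ffunP => k; rewrite !ffunE swapS_involutive. Qed.

Lemma swapT_swapT t y y' (r : reg n t) :
  swapT y' (swapT y r) = swapT (bxor y y') r.
Proof.
apply/ffunP => k; rewrite !ffunE /swapS /=; congr pair; apply/ffunP => j;
by rewrite !ffunE; case: (y j); case: (y' j).
Qed.

Lemma sum_bits_split (C : numClosedFieldType) s (F : bits n -> C) :
  \sum_(x : bits n) F x
  = \sum_(a | supp_in s a) \sum_(c | supp_in (complb s) c) F (bor a c).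
Proof.
pose restr s' x : bits n := [ffun j => s' j && x j].
rewrite pair_big_dep /= (reindex (fun x => (restr s x, restr (complb s) x))) /=.
  apply: eq_big => x.
    symmetry; apply/andP; split; apply/forallP => j; rewrite !ffunE;
    by case: (s j); case: (x j).
  move=> _; congr F; apply/ffunP => j; rewrite !ffunE; by case: (s j); case: (x j).
exists (fun p => bor p.1 p.2) => [x _|[a c]].
  by apply/ffunP => j; rewrite !ffunE; case: (s j); case: (x j).
rewrite inE /= => /andP [/forallP sa /forallP sc]; congr pair; apply/ffunP => j;
move: (sa j) (sc j); rewrite !ffunE;
by case: (s j); case: (a j); case: (c j).
Qed.

Lemma swapS_bor s a a' c c' :
  supp_in s a -> supp_in s a' -> supp_in (complb s) c -> supp_in (complb s) c' ->
  swapS s (bor a c, bor a' c') = (bor a' c, bor a c').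
Proof.
move=> /forallP sa /forallP sa' /forallP sc /forallP sc'.
congr pair; apply/ffunP => j; move: (sa j) (sa' j) (sc j) (sc' j); rewrite !ffunE;
by case: (s j); case: (a j); case: (a' j); case: (c j); case: (c' j).
Qed.

Lemma card_bits : #|{: bits n}| = (2 ^ n)%N.
Proof. by rewrite card_ffun card_bool card_ord. Qed.

Variable C : numClosedFieldType.

Lemma sign_dotb x y : (-1 : C) ^+ dotb x y = \prod_(j < n) (-1) ^+ (x j && y j).
Proof. by rewrite /dotb signr_odd expr_sum. Qed.

Lemma sign_dotb_bxor x y y' :
  (-1 : C) ^+ dotb x y * (-1) ^+ dotb x y' = (-1) ^+ dotb x (bxor y y').
Proof.
rewrite !sign_dotb -big_split; apply: eq_bigr => j _; rewrite ffunE.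
by case: (x j); case: (y j); case: (y' j); rewrite /= ?mulN1r ?opprK ?mul1r.
Qed.

Lemma sum_sign_dotb z :
  \sum_(x : bits n) (-1 : C) ^+ dotb x z = (2 ^ n)%:R * (z == zero_bits n)%:R.
Proof.
under eq_bigr => x _ do rewrite sign_dotb.
rewrite -(bigA_distr_bigA (fun j b => (-1 : C) ^+ (b && z j))) /=.
under eq_bigr => j _ do rewrite big_bool /=.
have [->|nz] := eqVneq z (zero_bits n).
  under eq_bigr => j _ do rewrite ffunE expr0.
  by rewrite prodr_const card_ord natrX mulr1.
have [j zj] : exists j, z j.
  apply/existsP; apply: contraNT nz => /existsPn z0.
  by apply/eqP/ffunP => j; rewrite ffunE; apply/negbTE/z0.
by rewrite (bigD1 j) //= zj expr1 addNr mul0r mulr0.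
Qed.

Lemma sum_sign_dotb_eq s (b : bool) z :
  \sum_(x | dotb x s == b) (-1 : C) ^+ dotb x z
  = (2 ^ n)%:R / 2 * ((z == zero_bits n)%:R + (-1) ^+ b * (z == s)%:R).
Proof.
rewrite big_mkcond /=.
transitivity (\sum_(x : bits n)
    ((-1 : C) ^+ dotb x z + (-1) ^+ b * (-1) ^+ dotb x (bxor s z)) / 2).
  apply: eq_bigr => x _; rewrite -sign_dotb_bxor.
  by case: (dotb x s); case: b; rewrite /=; field.
rewrite -mulr_suml big_split /= -mulr_sumr !sum_sign_dotb bxor_eq0 (eq_sym s).
by field.
Qed.

End Bitstrings.

Section SwapOverlaps.
Variables (C : numClosedFieldType) (n t : nat) (psi : {ffun bits n -> C}).

Definition swap_state (y : bits n) (r : reg n t) : C := init_reg psi (swapT y r).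

Definition swap_overlap (z : bits n) : C :=
  \sum_(r : reg n t) init_reg psi r * (init_reg psi (swapT z r))^*.

Lemma sum_init_reg_map (h : bits n * bits n -> bits n * bits n) :
  \sum_(r : reg n t) init_reg psi r * (init_reg psi [ffun k => h (r k)])^*
  = (\sum_(p : bits n * bits n) psi p.1 * psi p.2 * (psi (h p).1 * psi (h p).2)^*) ^+ t.
Proof.
pose f p := psi p.1 * psi p.2 * (psi (h p).1 * psi (h p).2)^*.
transitivity (\sum_(r : reg n t) \prod_(k < t) f (r k)).
  apply: eq_bigr => r _; rewrite /init_reg rmorph_prod -big_split.
  by apply: eq_bigr => k _; rewrite ffunE.
by rewrite -(bigA_distr_bigA (fun _ p => f p)) prodr_const card_ord.
Qed.

Lemma sum_swapS_purity (s : bits n) :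
  \sum_(p : bits n * bits n) psi p.1 * psi p.2 *
     (psi (swapS s p).1 * psi (swapS s p).2)^* = purity psi s.
Proof.
rewrite -(pair_bigA _ (fun x y => psi x * psi y *
  (psi (swapS s (x, y)).1 * psi (swapS s (x, y)).2)^*)) /= (sum_bits_split s).
apply: eq_bigr => a sa; under eq_bigr => c sc do rewrite (sum_bits_split s).
rewrite exchange_big /=; apply: eq_bigr => a' sa'.
rewrite /rdm big_distrlr /=; apply: eq_bigr => c sc; apply: eq_bigr => c' sc'.
have := swapS_bor sa sa' sc sc'; rewrite /swapS /= => -[-> ->].
by rewrite rmorphM; ring.
Qed.

Lemma swap_overlap_pairs (z : bits n) :
  swap_overlap z = (\sum_(p : bits n * bits n)
     psi p.1 * psi p.2 * (psi (swapS z p).1 * psi (swapS z p).2)^*) ^+ t.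
Proof. exact: sum_init_reg_map. Qed.

Lemma swap_overlapE (s : bits n) : swap_overlap s = purity psi s ^+ t.
Proof. by rewrite swap_overlap_pairs sum_swapS_purity. Qed.

Lemma swap_overlap0 : normalized psi -> swap_overlap (zero_bits n) = 1.
Proof.
move=> psi1; rewrite swap_overlap_pairs.
under eq_bigr => p _ do rewrite swapS0.
rewrite -(pair_bigA _ (fun x y => psi x * psi y * (psi x * psi y)^*)) /=.
suff -> : \sum_(x : bits n) \sum_(y : bits n) psi x * psi y * (psi x * psi y)^*
          = (\sum_(x : bits n) `|psi x| ^+ 2) ^+ 2 by rewrite psi1 !expr1n.
rewrite expr2 big_distrlr /=; apply: eq_bigr => x _; apply: eq_bigr => y _.
by rewrite !normCK rmorphM; ring.
Qed.

Lemma swap_state_overlap (y y' : bits n) :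
  \sum_(r : reg n t) swap_state y r * (swap_state y' r)^* = swap_overlap (bxor y y').
Proof.
rewrite (reindex_inj (inv_inj (@swapT_involutive n t y))) /=.
by apply: eq_bigr => r _; rewrite /swap_state swapT_involutive swapT_swapT.
Qed.

End SwapOverlaps.

Section Circuits.
Variables (C : numClosedFieldType) (n t : nat) (psi : {ffun bits n -> C}).

Lemma swap_test_finalE (s : bits n) (a : bool) (r : reg n t) :
  swap_test_final t psi s (a, r)
  = \sum_(b : bool) (-1) ^+ (a && b) / 2%:R
      * swap_state psi (if b then s else zero_bits n) r.
Proof.
rewrite /swap_test_final /= !big_bool /=.
rewrite perm_op_involutive; last exact: swapT_involutive.
rewrite !big_bool /= /had1 /swap_state swapT0 andbT andbF !mulr0 !add0r.
have s2_neq0 : sqrtC (2 : C) != 0 by rewrite sqrtC_eq0 pnatr_eq0.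
rewrite -[in RHS](sqrtCK (2 : C)).
by case: a; rewrite /=; field.
Qed.

Lemma swap_test_probE (s : bits n) (a : bool) : normalized psi ->
  swap_test_prob t psi s a = (1 + (-1) ^+ a * purity psi s ^+ t) / 2.
Proof.
move=> psi1; rewrite /swap_test_prob.
under eq_bigr => r _ do rewrite swap_test_finalE.
rewrite sum_normCK_lincomb !big_bool /= !swap_state_overlap !conj_sign_divn.
rewrite !bxor0r !bxor0l bxorxx swap_overlap0 // swap_overlapE.
by case: a; rewrite /=; field.
Qed.

Lemma hidden_cut_finalE (x : bits n) (r : reg n t) :
  hidden_cut_final t psi (x, r)
  = \sum_(y : bits n) (-1) ^+ dotb x y / (2 ^ n)%:R * swap_state psi y r.
Proof.
rewrite /hidden_cut_final /=; apply: eq_bigr => y _.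
rewrite perm_op_involutive; last exact: swapT_involutive.
rewrite (bigD1 (zero_bits n)) //= eqxx big1 ?addr0 => [|z /negPf->]; last by rewrite mulr0.
rewrite /hadn /swap_state.
have -> : dotb y (zero_bits n) = false by rewrite /dotb big1 // => j _; rewrite ffunE andbF.
have s2n_neq0 : sqrtC (2 ^+ n : C) != 0 by rewrite sqrtC_eq0 expf_eq0 pnatr_eq0 andbF.
rewrite natrX -[in RHS](sqrtCK (2 ^+ n : C)).
by field.
Qed.

Lemma pt_walsh (x : bits n) :
  pt t psi x = (2 ^ n)%:R^-1 * \sum_(z : bits n) (-1) ^+ dotb x z * swap_overlap t psi z.
Proof.
rewrite /pt; under eq_bigr => r _ do rewrite hidden_cut_finalE.
have two_n_neq0 : (2 ^ n)%:R != 0 :> C by rewrite pnatr_eq0 expn_eq0.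
rewrite sum_normCK_lincomb.
transitivity (\sum_(y : bits n) (2 ^ n)%:R^-2 *
    \sum_(z : bits n) (-1) ^+ dotb x z * swap_overlap t psi z).
  apply: eq_bigr => y _; rewrite (reindex_inj (inv_inj (bxorK y))) mulr_sumr /=.
  apply: eq_bigr => z _; rewrite swap_state_overlap conj_sign_divn bxorK.
  by rewrite mulf_div (sign_dotb_bxor C) bxorK; field.
by rewrite sumr_const card_bits -mulr_natr; field.
Qed.

Lemma sum_pt_dotb (s : bits n) (b : bool) : normalized psi ->
  \sum_(x | dotb x s == b) pt t psi x = (1 + (-1) ^+ b * purity psi s ^+ t) / 2.
Proof.
move=> psi1; under eq_bigr => x _ do rewrite pt_walsh.
rewrite -mulr_sumr exchange_big /=.
under eq_bigr => z _ do
  rewrite -mulr_suml sum_sign_dotb_eq -(mulrA _ _ (swap_overlap t psi z)) mulrDl.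
rewrite -mulr_sumr big_split /= sum_indicator.
under eq_bigr => z _ do rewrite -mulrA.
rewrite -mulr_sumr sum_indicator swap_overlap0 // swap_overlapE.
have two_n_neq0 : (2 ^ n)%:R != 0 :> C by rewrite pnatr_eq0 expn_eq0.
by field.
Qed.

End Circuits.

Unset Implicit Arguments.

Theorem mainTheorem9 (C : numClosedFieldType) (n t : nat)
    (psi : {ffun bits n -> C}) (s : bits n) :
  normalized psi -> (0 < t)%N ->
  [/\ swap_test_prob t psi s true = (1 - purity psi s ^+ t) / 2,
      swap_test_prob t psi s false = (1 + purity psi s ^+ t) / 2,
      (forall b : bool,
         swap_test_prob t psi s b = \sum_(x : bits n | dotb x s == b) pt t psi x)
    & forall m : nat, (0 < m)%N -> forall v : C,
        \sum_(xs : {ffun 'I_m -> bool} | est C xs == v)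
            \prod_(k < m) swap_test_prob t psi s (xs k)
        = \sum_(X : {ffun 'I_m -> bits n} | est C [ffun k => dotb (X k) s] == v)
            \prod_(k < m) pt t psi (X k)].
Proof.
move=> psi1 _.
have swap_test_marginal (b : bool) :
    swap_test_prob t psi s b = \sum_(x : bits n | dotb x s == b) pt t psi x.
  by rewrite swap_test_probE // sum_pt_dotb.
split => //.
- by rewrite swap_test_probE // expr1 mulN1r.
- by rewrite swap_test_probE // expr0 mul1r.
- move=> m _ v.
  exact: (sum_prod_pushforward (fun xs => est C xs == v) swap_test_marginal).
Qed.
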